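(* Let $E$ be an equation in the unknowns $x_1,\dots,x_n$ and let $h$ be an erasing solution of $E$ of rank $n-1$. Then $h(x_k)$ is the empty word for exactly one index $k$, the equation $\delta_k(E)$ is trivial, and $\Gamma_h=\{\mathbf u\in\mathbb Q^n:(\mathbf u)_k=0\}$.
   Context: An equation is a pair $(u,v)$ of words over $\{x_1,\dots,x_n\}$, trivial if $u=v$; a solution is a morphism $h$ into a free monoid $\{a_1,\dots,a_r\}^*$ with $h(u)=h(v)$; $h$ is erasing if some $h(x_i)$ is empty. $\gamma(h)_i=(|h(x_1)|_{a_i},\dots,|h(x_n)|_{a_i})$, $\Gamma_h$ is the $\mathbb Q$-span of the $\gamma(h)_i$ and the rank of $h$ is $\dim\Gamma_h$. $\delta_k(E)$ denotes the equation in $n-1$ unknowns obtained from $E$ by deleting all occurrences of $x_k$ on both sides. *)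

From HB Require Import structures.
From mathcomp Require Import all_boot all_order all_algebra.
Set Implicit Arguments. Unset Strict Implicit. Unset Printing Implicit Defensive.
Import Order.TTheory GRing.Theory Num.Theory.

(* Unknowns x_1..x_n are 'I_n ; letters a_1..a_r are 'I_r. *)
Definition word (n : nat) := seq 'I_n.

Definition equation (n : nat) := (word n * word n)%type.

Definition trivial_eq n (E : equation n) : Prop := E.1 = E.2.

Definition hmorph n r (h : 'I_n -> seq 'I_r) (w : word n) : seq 'I_r :=
  flatten (map h w).

Definition is_solution n r (h : 'I_n -> seq 'I_r) (E : equation n) : Prop :=
  hmorph h E.1 = hmorph h E.2.

Definition erasing n r (h : 'I_n -> seq 'I_r) : Prop := exists i, h i = [::].

(* gamma(h)_i = (|h(x_1)|_{a_i}, ..., |h(x_n)|_{a_i}) : the i-th row. *)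
Definition gamma_mx n r (h : 'I_n -> seq 'I_r) : 'M[rat]_(r, n) :=
  \matrix_(i < r, j < n) ((count_mem i (h j))%:R : rat).

(* Gamma_h = Q-span of the gamma(h)_i = row space of gamma_mx h;
   rank of h = dim Gamma_h. *)
Definition rank_h n r (h : 'I_n -> seq 'I_r) : nat := \rank (gamma_mx h).

(* delta_k(E): delete all occurrences of x_k, the remaining unknowns being
   renamed x_1..x_{n-1} (order preserving) via unlift k. *)
Definition delta n (k : 'I_n) (E : equation n) : equation n.-1 :=
  (pmap (unlift k) E.1, pmap (unlift k) E.2).

From HB Require Import structures.
From mathcomp Require Import all_boot all_order all_algebra.
From mathcomp Require Import ring zify.
Import Order.TTheory GRing.Theory Num.Theory.
Set Implicit Arguments. Unset Strict Implicit.
Local Open Scope ring_scope.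

(* If h(x_k) is empty, the column k of the matrix gamma is zero,
   and since gamma has rank n-1 every linear relation between its columns is
   supported on k.  Hence the other unknowns have linearly independent (in
   particular nonzero) Parikh vectors, and a morphism with linearly
   independent Parikh vectors is injective on words: if h(u) = h(v) with u
   starting by a and v by b != a, write h(b) = h(a) t and factor h through the
   injective substitution b |-> a b, which keeps the Parikh vectors
   independent and decreases the total length.  Applied to the equation with
   x_k deleted, this forces delta_k(E) to be trivial.  Finally Gamma_h lies in
   the hyperplane (u)_k = 0 and has its dimension n-1. *)

Section PrefixSubstitution.
Variables (T : eqType) (x y : T).

Definition prefix_subst (w : seq T) : seq T :=
  flatten [seq if z == y then [:: x; y] else [:: z] | z <- w].

Fixpoint prefix_unsubst (w : seq T) : seq T :=
  if w is z :: s then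
    if s is z2 :: s2 then
      if (z == x) && (z2 == y) then y :: prefix_unsubst s2
      else z :: prefix_unsubst s
    else [:: z]
  else [::].

Lemma prefix_subst_cons z s :
  prefix_subst (z :: s) = (if z == y then [:: x; y] else [:: z]) ++ prefix_subst s.
Proof. by []. Qed.

Hypothesis neq_xy : x != y.

Lemma prefix_subst_head_neq s z s' : prefix_subst s = z :: s' -> z != y.
Proof.
case: s => [|a s] //; rewrite prefix_subst_cons.
by case: eqP => [_|/eqP ha] /= [<- _].
Qed.

Lemma prefix_substK : cancel prefix_subst prefix_unsubst.
Proof.
elim=> [|z s IHs] //; rewrite prefix_subst_cons.
case: (eqVneq z y) => [->|neq_zy] /=; first by rewrite !eqxx /= IHs.
case Es: (prefix_subst s) => [|z2 s2].
  by case: s Es IHs => [|a s] //; rewrite prefix_subst_cons; case: (a == y).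
by rewrite (negbTE (prefix_subst_head_neq Es)) andbF -Es IHs.
Qed.

End PrefixSubstitution.

Lemma cat_eq_prefix (T : eqType) (s1 t1 s2 t2 : seq T) :
  s1 ++ t1 = s2 ++ t2 -> (size s1 <= size s2)%N -> s2 = s1 ++ drop (size s1) s2.
Proof.
move=> e le12; have := congr1 (take (size s1)) e.
rewrite take_size_cat // take_cat ltn_neqAle le12 andbT.
case: eqP => [eq12|_] /= ->; first by rewrite eq12 subnn take0 cats0 drop_size cats0.
by rewrite size_take_min (minn_idPl le12) cat_take_drop.
Qed.

Section ParikhFree.
Variables m r : nat.
Implicit Types (h : 'I_m -> seq 'I_r) (c : 'I_m -> rat).

Lemma hmorph_cons h a w : hmorph h (a :: w) = h a ++ hmorph h w.
Proof. by []. Qed.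

Lemma hmorph_cat h w1 w2 : hmorph h (w1 ++ w2) = hmorph h w1 ++ hmorph h w2.
Proof. by rewrite /hmorph map_cat flatten_cat. Qed.

Definition weight h := (\sum_j size (h j))%N.

Definition parikh_free h := forall c,
  (forall i : 'I_r, \sum_j c j * (count_mem i (h j))%:R = 0) -> forall j, c j = 0.

Lemma sum_delta_mul (a : 'I_m) (f : 'I_m -> rat) :
  \sum_j (j == a)%:R * f j = f a.
Proof.
rewrite (bigD1 a) //= eqxx mul1r big1 ?addr0 // => j /negbTE ->.
by rewrite mul0r.
Qed.

Lemma parikh_free_nonempty h j : parikh_free h -> h j != [::].
Proof.
move=> free_h; apply/eqP => hj.
have c0 : forall i : 'I_r, \sum_j' (j' == j)%:R * (count_mem i (h j'))%:R = 0 :> rat.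
  by move=> i; rewrite sum_delta_mul hj.
by have /eqP := free_h _ c0 j; rewrite eqxx oner_eq0.
Qed.

Section PrefixReduct.
Variables (h : 'I_m -> seq 'I_r) (a b : 'I_m) (t : seq 'I_r).
Hypothesis hb : h b = h a ++ t.

(* h factors as this morphism composed with the substitution b |-> a b. *)
Definition prefix_reduct j := if j == b then t else h j.

Lemma prefix_reduct_neq j : j != b -> prefix_reduct j = h j.
Proof. by rewrite /prefix_reduct => /negbTE ->. Qed.

Lemma weight_prefix_reduct : weight h = (weight prefix_reduct + size (h a))%N.
Proof.
rewrite /weight (bigD1 b) //= [in RHS](bigD1 b) //= /prefix_reduct eqxx hb size_cat.
rewrite [in RHS](eq_bigr (fun j => size (h j))) => [|j /negbTE -> //].
lia.
Qed.

Hypothesis neq_ab : a != b.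

Lemma hmorph_prefix_reduct w :
  hmorph prefix_reduct (prefix_subst a b w) = hmorph h w.
Proof.
elim: w => [|z s IHs] //.
rewrite prefix_subst_cons hmorph_cat IHs /=.
case: (eqVneq z b) => [->|neq_zb]; rewrite /hmorph /= !cats0.
  by rewrite prefix_reduct_neq // /prefix_reduct eqxx hb.
by rewrite prefix_reduct_neq.
Qed.

(* A relation c between the columns of prefix_reduct yields the relation
   between those of h that is c except at a, where it is c a - c b, because
   count(h b) = count(h a) + count(t). *)
Lemma parikh_free_prefix_reduct : parikh_free h -> parikh_free prefix_reduct.
Proof.
move=> free_h c c0.
pose c' j := if j == a then c a - c b else c j.
have c'0 : forall i : 'I_r, \sum_j c' j * (count_mem i (h j))%:R = 0.
  move=> i; rewrite -[RHS](c0 i).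
  rewrite (eq_bigr (fun j => c j * (count_mem i (prefix_reduct j))%:R
      + ((j == a)%:R * (- c b * (count_mem i (h a))%:R)
      + (j == b)%:R * (c b * (count_mem i (h a))%:R)))).
    by rewrite !big_split /= !sum_delta_mul mulNr addNr addr0.
  move=> j _; rewrite /c' /prefix_reduct.
  case: (eqVneq j a) => [->|neq_ja]; first by rewrite (negbTE neq_ab) /=; ring.
  case: (eqVneq j b) => [->|neq_jb] /=; last by rewrite !mul0r !addr0.
  by rewrite hb count_cat natrD; ring.
have c'_eq0 := free_h c' c'0.
have cb0 : c b = 0 by have := c'_eq0 b; rewrite /c' eq_sym (negbTE neq_ab).
move=> j; case: (eqVneq j a) => [->|neq_ja].
  by have := c'_eq0 a; rewrite /c' eqxx cb0 subr0.
by have := c'_eq0 j; rewrite /c' (negbTE neq_ja).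
Qed.

End PrefixReduct.

Lemma parikh_free_hmorph_inj h : parikh_free h -> injective (hmorph h).
Proof.
have [N] := ubnP (weight h); elim: N h => // N IHN h lt_hN free_h.
have cons_eq : forall a b u v, a != b -> (size (h a) <= size (h b))%N ->
    h a ++ hmorph h u = h b ++ hmorph h v -> a :: u = b :: v.
  move=> a b u v neq_ab le_ab e.
  have hb := cat_eq_prefix e le_ab.
  set g := prefix_reduct h b (drop (size (h a)) (h b)).
  apply: (can_inj (prefix_substK neq_ab)); apply: (IHN g).
  - move: lt_hN; rewrite /g (weight_prefix_reduct hb).
    have : (0 < size (h a))%N by rewrite lt0n size_eq0 parikh_free_nonempty.
    move: (weight _) => w; lia.
  - exact: parikh_free_prefix_reduct hb neq_ab free_h.
  - by rewrite !(hmorph_prefix_reduct hb neq_ab) !hmorph_cons e.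
elim=> [|a u IHu] [|b v] //; rewrite ?hmorph_cons.
- move=> /esym/(congr1 size); rewrite size_cat /=.
  by have := parikh_free_nonempty b free_h; rewrite -size_eq0; case: (size (h b)).
- move=> /(congr1 size); rewrite size_cat /=.
  by have := parikh_free_nonempty a free_h; rewrite -size_eq0; case: (size (h a)).
move=> e; case: (eqVneq a b) => [eq_ab|neq_ab].
  by move: e; rewrite -eq_ab => /eqP; rewrite eqseq_cat // eqxx => /eqP /IHu ->.
case: (leqP (size (h a)) (size (h b))) => le_ab; first exact: cons_eq.
by apply/esym/cons_eq => //; [rewrite eq_sym | exact: ltnW].
Qed.

End ParikhFree.

Lemma hmorph_erase n r (h : 'I_n -> seq 'I_r) (k : 'I_n) : h k = [::] ->
  forall w, hmorph h w = hmorph (h \o lift k) (pmap (unlift k) w).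
Proof.
move=> hk; elim=> [|z s IHs] //=.
by rewrite hmorph_cons IHs; case: unliftP => [j ->|->] //=; rewrite hk.
Qed.

Section CorankOneZeroColumn.
Variables (F : fieldType) (r n : nat) (A : 'M[F]_(r, n)) (k : 'I_n).
Hypotheses (Ak0 : forall i, A i k = 0) (rankA : \rank A = n.-1).

Lemma trmx_ker_zero_col (c : 'rV[F]_n) :
  c *m A^T = 0 -> forall j, j != k -> c 0 j = 0.
Proof.
move=> cA0 j neq_jk.
pose ek : 'rV[F]_n := delta_mx 0 k.
have ek_ker : (ek <= kermx A^T)%MS.
  by apply/sub_kermxP; rewrite /ek -rowE; apply/matrixP => a i; rewrite !mxE Ak0.
have rank_ker : \rank (kermx A^T) = 1%N.
  by rewrite mxrank_ker mxrank_tr rankA; have := ltn_ord k; lia.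
have ker_ek : (kermx A^T <= ek)%MS.
  by rewrite -(mxrank_leqif_sup ek_ker) rank_ker mxrank_delta.
have /submxP [D ->] : (c <= ek)%MS by apply: submx_trans ker_ek; apply/sub_kermxP.
by rewrite !mxE big_ord1 !mxE (negbTE neq_jk) andbF mulr0.
Qed.

Lemma sub_zero_col_mxP (u : 'rV[F]_n) : (u <= A)%MS <-> u 0 k = 0.
Proof.
pose ek : 'cV[F]_n := delta_mx k 0.
have sub_ker : (A <= kermx ek)%MS.
  by apply/sub_kermxP; rewrite -colE; apply/matrixP => i a; rewrite !mxE Ak0.
have /eqmxP -> : (A == kermx ek)%MS.
  rewrite -(geq_leqif (mxrank_leqif_eq sub_ker)) mxrank_ker mxrank_delta rankA.
  by have := ltn_ord k; lia.
split=> [/sub_kermxP|uk0].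
  by rewrite -colE => /matrixP /(_ 0 0); rewrite !mxE.
by apply/sub_kermxP; rewrite -colE; apply/matrixP => a b; rewrite !mxE !ord1.
Qed.

End CorankOneZeroColumn.

Lemma gamma_mulmx_trE n r (h : 'I_n -> seq 'I_r) (c : 'rV[rat]_n) i :
  (c *m (gamma_mx h)^T) 0 i = \sum_j c 0 j * (count_mem i (h j))%:R.
Proof. by rewrite !mxE; apply: eq_bigr => j _; rewrite !mxE. Qed.

Lemma parikh_free_lift n r (h : 'I_n -> seq 'I_r) (k : 'I_n) :
    (forall c : 'rV[rat]_n, c *m (gamma_mx h)^T = 0 -> forall j, j != k -> c 0 j = 0) ->
  parikh_free (h \o lift k).
Proof.
move=> ker c' c'0 j.
pose c : 'rV[rat]_n := \row_j (if unlift k j is Some j' then c' j' else 0).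
have -> : c' j = c 0 (lift k j) by rewrite mxE liftK.
apply: ker; last by rewrite eq_sym neq_lift.
apply/rowP => i; rewrite gamma_mulmx_trE mxE (bigD1_ord k) //= mxE unlift_none.
by rewrite mul0r add0r -[RHS](c'0 i); apply: eq_bigr => j' _; rewrite mxE liftK.
Qed.

Theorem lemma4p1 (n r : nat) (E : equation n) (h : 'I_n -> seq 'I_r) :
  is_solution h E -> erasing h -> rank_h h = n.-1 ->
  exists k : 'I_n,
    (forall j : 'I_n, h j = [::] <-> j = k) /\
    trivial_eq (delta k E) /\
    (forall u : 'rV[rat]_n, (u <= gamma_mx h)%MS <-> u ord0 k = 0%R).
Proof.
move=> sol_h [k hk] rank_h.
have col_k0 : forall i, gamma_mx h i k = 0 by move=> i; rewrite mxE hk.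
have ker := trmx_ker_zero_col col_k0 rank_h.
exists k; split; [|split; last exact: sub_zero_col_mxP].
- move=> j; split=> [hj|->//]; apply/eqP/negPn/negP => neq_jk.
  suff /ker /(_ j neq_jk) /eqP : (delta_mx 0 j : 'rV[rat]_n) *m (gamma_mx h)^T = 0.
    by rewrite mxE !eqxx oner_eq0.
  by rewrite -rowE; apply/matrixP => a i; rewrite !mxE hj.
- apply: (parikh_free_hmorph_inj (parikh_free_lift ker)).
  by rewrite -!hmorph_erase.
Qed.
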